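(* Let $p$ be a prime, let $N,K,T,M,h$ be positive integers with $K\mid M$, and let $\beta_1,\ldots,\beta_{K+T}\in\mathbb{F}_p$ be pairwise distinct and $\alpha_1,\ldots,\alpha_N\in\mathbb{F}_p$ be pairwise distinct with $\{\alpha_1,\ldots,\alpha_N\}\cap\{\beta_1,\ldots,\beta_{K+T}\}=\emptyset$. For $k\in[K+T]$ let $L_k(x)=\prod_{\ell\in[K+T]\setminus\{k\}}\frac{x-\beta_\ell}{\beta_k-\beta_\ell}$. For each client $n\in[N]$ let $D_n,d_n$ be positive integers, let $\overline{X}_n^i\in\mathbb{F}_p^{M\times d_n}$ and $\overline{W}_n^i\in\mathbb{F}_p^{d_n\times h}$ for $i\in[D_n]$, and for $k\in[K]$ let $\overline{X}_{n,k}^i\in\mathbb{F}_p^{(M/K)\times d_n}$ be the $k$-th block of $M/K$ consecutive rows of $\overline{X}_n^i$. Let $Z_{n,k}^i\in\mathbb{F}_p^{(M/K)\times d_n}$ and $V_{n,k}^i\in\mathbb{F}_p^{d_n\times h}$ ($k=K+1,\ldots,K+T$) be arbitrary (mask) matrices, and define the polynomials $$F_n^i(x)=\sum_{k=1}^K\overline{X}_{n,k}^iL_k(x)+\sum_{k=K+1}^{K+T}Z_{n,k}^iL_k(x),\qquad G_n^i(x)=\sum_{k=1}^K\overline{W}_{n}^iL_k(x)+\sum_{k=K+1}^{K+T}V_{n,k}^iL_k(x).$$ Fix a batch $\mathcal{B}\subseteq[M/K]$ of row indices, and for a matrix $A$ with $M/K$ rows let $A^{(\mathcal{B})}$ denote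 its submatrix of rows indexed by $\mathcal{B}$. For each $n'\in[N]$ define the coded result $$\widetilde{H}_{n'}^{(\mathcal{B})}=\sum_{n=1}^N\sum_{i=1}^{D_n}F_n^{i}(\alpha_{n'})^{(\mathcal{B})}\,G_n^i(\alpha_{n'}),$$ and for each $n$ let $\overline{H}_n^{(\mathcal{B})}$ be the vertical stacking over $k=1,\ldots,K$ of the matrices $\sum_{i=1}^{D_n}(\overline{X}_{n,k}^{i})^{(\mathcal{B})}\overline{W}_n^i$. Then for every subset $\mathcal{U}\subseteq[N]$ with $|\mathcal{U}|\ge 2(K+T-1)+1$ (i.e., in the presence of up to $N-2(K+T-1)-1$ straggling clients whose results are missing), the sum $\overline{H}^{(\mathcal{B})}=\sum_{n=1}^N\overline{H}_n^{(\mathcal{B})}$ can be exactly recovered from $\{\widetilde{H}_{n'}^{(\mathcal{B})}:n'\in\mathcal{U}\}$ (together with the public points $\alpha_{n'}$, $\beta_k$).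
   Context: This describes the FedVS protocol for split vertical federated learning: client $n$ holds quantized local data (the $i$-th matrix $\overline{X}_n^i$ being the quantized $i$-th elementwise power of its data) and a quantized polynomial-network local model $(\overline{W}_n^1,\ldots,\overline{W}_n^{D_n})$; the pair $\widetilde{X}_{n,n'}=(F_n^i(\alpha_{n'}))_i$, $\widetilde{W}_{n,n'}=(G_n^i(\alpha_{n'}))_i$ is the Lagrange-coded secret share sent by client $n$ to client $n'$, and $\widetilde{H}^{(\mathcal{B})}_{n'}$ is what client $n'$ uploads to the server. $[N]=\{1,\ldots,N\}$. *)

From mathcomp Require Import all_boot all_order all_algebra.
Set Implicit Arguments. Unset Strict Implicit. Unset Printing Implicit Defensive.
Import GRing.Theory.
Local Open Scope ring_scope.

Definition lagrange (F : fieldType) (n : nat) (beta : 'I_n -> F) (k : 'I_n) (x : F) : F :=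
  \prod_(l < n | l != k) ((x - beta l) / (beta k - beta l)).

(* k-th block (k counted from 0) of m consecutive rows of an (Mr x d) matrix. *)
Definition row_block (F : fieldType) (Mr m d : nat) (A : 'M[F]_(Mr, d)) (k : nat)
  : 'M[F]_(m, d) :=
  \matrix_(r < m, j < d)
    (if @insub _ (fun q => q < Mr)%N _ (k * m + r)%N is Some q then A q j else 0).

Definition subrows (F : fieldType) (m d : nat) (B : {set 'I_m}) (A : 'M[F]_(m, d))
  : 'M[F]_(#|B|, d) :=
  \matrix_(i < #|B|, j < d) A (enum_val i) j.

Lemma stack_div_lt (K b : nat) (q : 'I_(K * b)) : (q %/ b < K)%N.
Proof.
case: b q => [|b] q; first by case: q => q; rewrite muln0.
by rewrite ltn_divLR // ltn_ord.
Qed.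

Lemma stack_mod_lt (K b : nat) (q : 'I_(K * b)) : (q %% b < b)%N.
Proof.
case: b q => [|b] q; first by case: q => q; rewrite muln0.
by rewrite ltn_mod.
Qed.

Definition stackK (F : fieldType) (K b h : nat) (f : 'I_K -> 'M[F]_(b, h))
  : 'M[F]_(K * b, h) :=
  \matrix_(q < K * b, j < h) f (Ordinal (stack_div_lt q)) (Ordinal (stack_mod_lt q)) j.

Section FedVS.
Variables (F : fieldType) (N K T M h : nat).
Variables (beta : 'I_(K + T) -> F) (alpha : 'I_N -> F).
Variables (D d : 'I_N -> nat).
Variables (X : forall n, 'I_(D n) -> 'M[F]_(M, d n))
          (W : forall n, 'I_(D n) -> 'M[F]_(d n, h))
          (Z : forall n, 'I_(D n) -> 'I_T -> 'M[F]_(M %/ K, d n))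
          (V : forall n, 'I_(D n) -> 'I_T -> 'M[F]_(d n, h)).

Definition Lk (k : 'I_(K + T)) (x : F) : F := lagrange beta k x.

Definition Fpoly (n : 'I_N) (i : 'I_(D n)) (x : F) : 'M[F]_(M %/ K, d n) :=
  \sum_(k < K) Lk (lshift T k) x *: row_block (M %/ K) (X i) k
  + \sum_(t < T) Lk (rshift K t) x *: Z i t.

Definition Gpoly (n : 'I_N) (i : 'I_(D n)) (x : F) : 'M[F]_(d n, h) :=
  \sum_(k < K) Lk (lshift T k) x *: W i
  + \sum_(t < T) Lk (rshift K t) x *: V i t.

Definition Htilde (B : {set 'I_(M %/ K)}) (n' : 'I_N) : 'M[F]_(#|B|, h) :=
  \sum_(n < N) \sum_(i < D n) subrows B (Fpoly i (alpha n')) *m Gpoly i (alpha n').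

Definition Hbar_n (B : {set 'I_(M %/ K)}) (n : 'I_N) : 'M[F]_(K * #|B|, h) :=
  stackK (fun k : 'I_K =>
    \sum_(i < D n) subrows B (row_block (M %/ K) (X i) k) *m W i).

Definition Hbar (B : {set 'I_(M %/ K)}) : 'M[F]_(K * #|B|, h) :=
  \sum_(n < N) Hbar_n B n.

End FedVS.

(* Entrywise, x |-> sum_n sum_i F_n^i(x)^(B) G_n^i(x) is a polynomial of degree at
   most 2(K+T-1): each share F_n^i, G_n^i is a combination of the K+T Lagrange
   polynomials of the nodes beta, which have degree K+T-1.  The results received
   from U are its values at #|U| >= 2(K+T-1)+1 distinct points alpha_u, so Lagrange
   interpolation through these points recovers its value anywhere, in particular
   at beta_k for k <= K.  There the shares collapse to the data block X_{n,k}^i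
   and to W_n^i, so these values are exactly the K blocks of Hbar. *)

From mathcomp Require Import all_boot all_order all_algebra zify.
(* Imported after all_algebra so that [lagrange] is the one of Defs, not qpoly's. *)
From Pilot Require Import Defs.
Set Implicit Arguments. Unset Strict Implicit. Unset Printing Implicit Defensive.
Import GRing.Theory.
Local Open Scope ring_scope.

Section LagrangeBasis.
Variables (F : fieldType) (n : nat) (a : 'I_n -> F).

Definition lagrange_poly (k : 'I_n) : {poly F} :=
  (\prod_(l < n | l != k) (a k - a l))^-1 *: \prod_(l < n | l != k) ('X - (a l)%:P).

Lemma horner_lagrange_poly k x : (lagrange_poly k).[x] = lagrange a k x.
Proof.
rewrite hornerZ horner_prod /lagrange big_split /= prodfV mulrC.
by under eq_bigr do rewrite hornerXsubC.
Qed.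

Lemma lagrange_poly_of_size k : lagrange_poly k \is a poly_of_size n.
Proof.
rewrite qualifE /= (leq_trans (size_scale_leq _ _)) // size_prod => [|l _]; last first.
  by rewrite polyXsubC_eq0.
rewrite (eq_bigr (fun _ => 2%N)) => [|l _]; last by rewrite size_XsubC.
rewrite sum_nat_const cardC1 card_ord.
by case: n k => [[]|m] // _; lia.
Qed.

Hypothesis a_inj : injective a.

Lemma lagrange_node k j : lagrange a k (a j) = (j == k)%:R.
Proof.
rewrite /lagrange; have [->|njk] := eqVneq j k.
  by rewrite big1 // => l lk; rewrite divff // subr_eq0 (inj_eq a_inj) eq_sym.
by rewrite (bigD1 j njk) /= subrr !mul0r.
Qed.

Lemma lagrange_interpolation (q : {poly F}) : q \is a poly_of_size n ->
  q = \sum_(k < n) q.[a k] *: lagrange_poly k.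
Proof.
move=> q_n; apply/eqP; rewrite -subr_eq0; apply/eqP.
set r := _ - _; have r_n : r \is a poly_of_size n.
  by rewrite rpredB // rpred_sum // => k _; rewrite rpredZ ?lagrange_poly_of_size.
apply: (@roots_geq_poly_eq0 _ _ (codom a)).
- apply/allP => _ /codomP [j ->]; rewrite /root hornerD hornerN horner_sum.
  rewrite (bigD1 j) //= big1 => [|k kj]; rewrite hornerZ horner_lagrange_poly lagrange_node.
    by rewrite eqxx mulr1 addr0 subrr.
  by rewrite eq_sym (negbTE kj) mulr0.
- by rewrite codomE map_inj_uniq ?enum_uniq.
- by rewrite size_codom card_ord.
Qed.

Lemma map_mx_lagrange_interpolation r c (P : 'M[{poly F}]_(r, c)) x :
  P \is a mxOver (poly_of_size n) ->
  map_mx (horner_eval x) P = \sum_(k < n) lagrange a k x *: map_mx (horner_eval (a k)) P.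
Proof.
move=> /mxOverP P_n; apply/matrixP => i j; rewrite summxE mxE horner_evalE.
rewrite [P i j](lagrange_interpolation (P_n i j)) horner_sum.
by apply: eq_bigr => k _; rewrite hornerZ horner_lagrange_poly !mxE mulrC.
Qed.

End LagrangeBasis.

Section PolyMatrixSize.
Variable R : nzRingType.

Lemma poly_of_sizeS m1 m2 : (m1 <= m2)%N ->
  {subset poly_of_size m1 <= @poly_of_size R m2}.
Proof. by move=> le_m12 p; rewrite !qualifE /= => /leq_trans; apply. Qed.

Lemma mulmx_poly_of_size m1 m2 r c e (P : 'M[{poly R}]_(r, c)) (Q : 'M_(c, e)) :
  P \is a mxOver (poly_of_size m1) -> Q \is a mxOver (poly_of_size m2) ->
  P *m Q \is a mxOver (poly_of_size (m1 + m2).-1).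
Proof.
move=> /mxOverP P_m1 /mxOverP Q_m2; apply/mxOverP => i j.
rewrite mxE; apply: rpred_sum => l _; apply: leq_trans (size_polyMleq _ _) _.
by rewrite -!subn1; exact: leq_sub2r (leq_add (P_m1 i l) (Q_m2 l j)).
Qed.

End PolyMatrixSize.

Section LagrangeShare.
Variables (F : fieldType) (K T : nat) (beta : 'I_(K + T) -> F) (r c : nat).

Definition lagrange_share (A : 'I_K -> 'M[F]_(r, c)) (Z : 'I_T -> 'M[F]_(r, c))
    : 'M[{poly F}]_(r, c) :=
  \sum_(k < K) lagrange_poly beta (lshift T k) *: map_mx polyC (A k)
  + \sum_(t < T) lagrange_poly beta (rshift K t) *: map_mx polyC (Z t).

Variables (A : 'I_K -> 'M[F]_(r, c)) (Z : 'I_T -> 'M[F]_(r, c)).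

Lemma horner_lagrange_share x :
  map_mx (horner_eval x) (lagrange_share A Z) =
  \sum_(k < K) lagrange beta (lshift T k) x *: A k
  + \sum_(t < T) lagrange beta (rshift K t) x *: Z t.
Proof.
have horner_polyC (C : 'M[F]_(r, c)) : map_mx (horner_eval x) (map_mx polyC C) = C.
  by rewrite -map_mx_comp map_mx_id // => y /=; rewrite horner_evalE hornerC.
rewrite map_mxD !map_mx_sum; congr (_ + _); apply: eq_bigr => k _;
by rewrite map_mxZ horner_polyC /= horner_evalE horner_lagrange_poly.
Qed.

Lemma lagrange_share_of_size :
  lagrange_share A Z \is a mxOver (poly_of_size (K + T)).
Proof.
apply/mxOverP => i j; rewrite mxE !summxE; apply: rpredD; apply: rpred_sum => k _;
by rewrite !mxE mulrC mul_polyC rpredZ ?lagrange_poly_of_size.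
Qed.

Lemma lagrange_share_node k : injective beta ->
  map_mx (horner_eval (beta (lshift T k))) (lagrange_share A Z) = A k.
Proof.
move=> beta_inj; rewrite horner_lagrange_share (bigD1 k) //= !big1 => [|t _|l lk].
- by rewrite lagrange_node // eqxx scale1r !addr0.
- by rewrite lagrange_node // eq_lrshift scale0r.
- by rewrite lagrange_node // eq_lshift eq_sym (negbTE lk) scale0r.
Qed.

End LagrangeShare.

Section CodedResult.
Variables (F : fieldType) (N K T M h : nat) (beta : 'I_(K + T) -> F).
Variables (D d : 'I_N -> nat).
Variables (X : forall n, 'I_(D n) -> 'M[F]_(M, d n))
          (W : forall n, 'I_(D n) -> 'M[F]_(d n, h))
          (Z : forall n, 'I_(D n) -> 'I_T -> 'M[F]_(M %/ K, d n))
          (V : forall n, 'I_(D n) -> 'I_T -> 'M[F]_(d n, h)).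
Variable B : {set 'I_(M %/ K)}.

Lemma Fpoly_share n (i : 'I_(D n)) x : Fpoly beta X Z i x =
  map_mx (horner_eval x) (lagrange_share beta (row_block (M %/ K) (X i)) (Z i)).
Proof. by rewrite horner_lagrange_share. Qed.

Lemma Gpoly_share n (i : 'I_(D n)) x : Gpoly beta W V i x =
  map_mx (horner_eval x) (lagrange_share beta (fun=> W i) (V i)).
Proof. by rewrite horner_lagrange_share. Qed.

Definition Htilde_poly : 'M[{poly F}]_(#|B|, h) :=
  \sum_(n < N) \sum_(i < D n)
    rowsub (@enum_val _ (mem B))
      (lagrange_share beta (row_block (M %/ K) (X i)) (Z i))
    *m lagrange_share beta (fun=> W i) (V i).

Lemma horner_Htilde_poly x : map_mx (horner_eval x) Htilde_poly =
  \sum_(n < N) \sum_(i < D n) subrows B (Fpoly beta X Z i x) *m Gpoly beta W V i x.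
Proof.
rewrite map_mx_sum; apply: eq_bigr => n _; rewrite map_mx_sum; apply: eq_bigr => i _.
by rewrite map_mxM map_mxsub Fpoly_share Gpoly_share.
Qed.

Lemma Htilde_poly_of_size :
  Htilde_poly \is a mxOver (poly_of_size (K + T + (K + T)).-1).
Proof.
apply/mxOverP => r j; rewrite !summxE; apply: rpred_sum => n _; rewrite summxE.
apply: rpred_sum => i _; apply/mxOverP/mulmx_poly_of_size; last exact: lagrange_share_of_size.
by apply/mxOverP => r' j'; rewrite mxE; apply/mxOverP/lagrange_share_of_size.
Qed.

Lemma Hbar_horner_Htilde_poly : injective beta ->
  Hbar X W B = stackK (fun k => map_mx (horner_eval (beta (lshift T k))) Htilde_poly).
Proof.
move=> beta_inj; apply/matrixP => q j.
rewrite [RHS]mxE horner_Htilde_poly !summxE; apply: eq_bigr => n _.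
rewrite mxE !summxE; apply: eq_bigr => i _.
by rewrite Fpoly_share Gpoly_share !lagrange_share_node.
Qed.

End CodedResult.

Theorem theorem1 (p N K T M h : nat) :
  prime p -> (0 < N)%N -> (0 < K)%N -> (0 < T)%N -> (0 < M)%N -> (0 < h)%N ->
  (K %| M)%N ->
  forall (beta : 'I_(K + T) -> 'F_p) (alpha : 'I_N -> 'F_p),
  injective beta -> injective alpha ->
  (forall (n : 'I_N) (k : 'I_(K + T)), alpha n != beta k) ->
  forall (B : {set 'I_(M %/ K)}) (U : {set 'I_N}),
  (2 * (K + T - 1) + 1 <= #|U|)%N ->
  exists dec : ('I_N -> 'M['F_p]_(#|B|, h)) -> 'M['F_p]_(K * #|B|, h),
  forall (D d : 'I_N -> nat), (forall n, 0 < D n)%N -> (forall n, 0 < d n)%N ->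
  forall (X : forall n, 'I_(D n) -> 'M['F_p]_(M, d n))
         (W : forall n, 'I_(D n) -> 'M['F_p]_(d n, h))
         (Z : forall n, 'I_(D n) -> 'I_T -> 'M['F_p]_(M %/ K, d n))
         (V : forall n, 'I_(D n) -> 'I_T -> 'M['F_p]_(d n, h)),
  dec (fun n' => if n' \in U then Htilde beta alpha X W Z V B n' else 0)
  = Hbar X W B.
Proof.
(* Disjointness of the alphas from the betas is needed only for privacy. *)
move=> _ _ _ _ _ _ _ beta alpha beta_inj alpha_inj _ B U U_large.
pose a (u : 'I_#|U|) := alpha (enum_val u).
have a_inj : injective a by move=> u v /alpha_inj /enum_val_inj.
exists (fun H => stackK (fun k =>
  \sum_(u < #|U|) lagrange a u (beta (lshift T k)) *: H (enum_val u))).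
move=> D d _ _ X W Z V; rewrite (Hbar_horner_Htilde_poly X W Z V B beta_inj).
rewrite /stackK; apply: eq_mx => q j.
have /mxOverP H_size := Htilde_poly_of_size beta X W Z V B.
rewrite (map_mx_lagrange_interpolation a_inj); last first.
  by apply/mxOverP => r c; apply: poly_of_sizeS (H_size r c); lia.
apply: (congr1 (fun A : 'M_(_, _) => A _ _)); apply: eq_bigr => u _.
by rewrite enum_valP horner_Htilde_poly.
Qed.
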